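(* Let $A$ be a satisfiable EFO branch. Then $A$ has a standard model $\mathcal{I}$ in which $\mathcal{I}\alpha$ is countable for every sort $\alpha$.
   Context: Types: a countable set of base types including a distinguished $o$; other base types are sorts ($\alpha$). Types: base types and $\sigma\tau$ (functions from $\sigma$ to $\tau$; $\sigma\tau\mu=\sigma(\tau\mu)$). Countably many names with unique types, infinitely many per type. Terms: names; $st:\mu$ for $s:\tau\mu,t:\tau$; $\lambda x.t:\sigma\tau$ for a name $x:\sigma$, $t:\tau$. Logical constants: $\neg:oo$, $\to:ooo$, $=_\sigma:\sigma\sigma o$ for every type $\sigma$, and $\forall_\alpha:(\alpha o)o$ for every sort $\alpha$; all other names are variables. Formulas: terms of type $o$; $s\neq_\sigma t$ is $\neg((=_\sigma s)t)$. A term is EFO if the only logical constants occurring in it are $\neg$, $\to$, $=_\alpha$ and $\forall_\alpha$ ($\alpha$ sorts). A formula is quasi-EFO if it is EFO or of the form $s\neq_\sigma t$ with $s,t$ EFO. Semantics: a frame $\mathcal{D}$ maps types to nonempty sets with $\mathcal{D}(\sigma\tau)\subseteq(\mathcal{D}\sigma\to\mathcal{D}\tau)$; standard if $\mathcal{D}(\sigma\tau)=(\mathcal{D}\sigma\to\mathcal{D}\tau)$. An assignment $\mathcal{I}$ into $\mathcal{D}$ extends $\mathcal{D}$ and maps names $x:\sigma$ into $\mathcal{D}\sigma$; $\mathcal{I}^x_a$ is the update. Partial evaluation: $\hat{\mathcal{I}}x=\mathcal{I}x$; $\hat{\mathcal{I}}(st)=(\hat{\mathcal{I}}s)(\hat{\mathcal{I}}t)$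 when defined; $\hat{\mathcal{I}}(\lambda x.s)=f$ if $\lambda x.s:\sigma\tau$, $f\in\mathcal{D}(\sigma\tau)$ and $\widehat{\mathcal{I}^x_a}s=fa$ for all $a\in\mathcal{D}\sigma$. An interpretation is an assignment with total evaluation. Logical: $\mathcal{I}o=\{0,1\}$, $\mathcal{I}(\neg)$ negation, $\mathcal{I}(\to)$ implication, $\mathcal{I}(=_\sigma)$ identity, $\mathcal{I}(\forall_\alpha)f=1$ iff $f$ is the constant function $1$. A set of formulas is satisfiable if some logical interpretation (into an arbitrary frame) evaluates each of them to $1$; a standard model is such a logical assignment into a standard frame. Normalization: fixed type-preserving total $[\cdot]$; $s$ normal iff $[s]=s$; (N1) $[[s]]=[s]$; (N2) $[[s]t]=[st]$; (N3) $[ys_1\dots s_n]=y[s_1]\dots[s_n]$ for a name $y$, $n\ge0$, $ys_1\dots s_n$ of base type; (N4) $\hat{\mathcal{I}}[s]=\hat{\mathcal{I}}s$ for every interpretation. Substitutions: type-preserving partial functions $\theta$ from names to terms ($\theta^x_s$ update), each extending to a type-preserving total $\hat\theta$ with (S1) $\hat\theta x=\theta x$ if $x\in\mathrm{Dom}\theta$, else $x$; (S2) $\hat\theta(st)=(\hat\theta s)(\hat\theta t)$; (S3) $[(\hat\theta(\lambda x.s))t]=[\widehat{\theta^x_t}s]$; (S4) $[\hat\emptyset s]=[s]$. An EFO branch is a set of normal quasi-EFO formulas. *)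

From mathcomp Require Import all_boot.
Set Implicit Arguments.
Unset Strict Implicit.
Unset Printing Implicit Defensive.

Inductive ty (S : countType) : Type :=
| To : ty S
| Tsort : S -> ty S
| Tarr : ty S -> ty S -> ty S.
Arguments To {S}.

Definition is_base {S : countType} (s : ty S) : bool :=
  match s with Tarr _ _ => false | _ => true end.
Definition is_sort {S : countType} (s : ty S) : bool :=
  match s with Tsort _ => true | _ => false end.

Definition S_dec {S : countType} (a b : S) : {a = b} + {a <> b} :=
  match a =P b with ReflectT e => left e | ReflectF n => right n end.

Definition ty_dec {S : countType} (s t : ty S) : {s = t} + {s <> t}.
Proof. pose proof (@S_dec S). decide equality. Defined.

Inductive name (S : countType) : Type :=
| NVar : ty S -> nat -> name S
| NNeg : name S
| NImp : name S
| NEq : ty S -> name S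
| NAll : S -> name S.
Arguments NNeg {S}.
Arguments NImp {S}.

Definition ntype {S : countType} (x : name S) : ty S :=
  match x with
  | NVar s _ => s
  | NNeg => Tarr To To
  | NImp => Tarr To (Tarr To To)
  | NEq s => Tarr s (Tarr s To)
  | NAll a => Tarr (Tarr (Tsort a) To) To
  end.

Definition name_dec {S : countType} (x y : name S) : {x = y} + {x <> y}.
Proof.
  pose proof (@S_dec S). pose proof (@ty_dec S).
  pose proof (fun m n : nat => match m =P n with ReflectT e => left e | ReflectF k => right k end : {m = n} + {m <> n}). decide equality.
Defined.

Inductive tm (S : countType) : ty S -> Type :=
| TNm (x : name S) : tm (ntype x)
| TApp (s t : ty S) : tm (Tarr s t) -> tm s -> tm t
| TLam (x : name S) (t : ty S) : tm t -> tm (Tarr (ntype x) t).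
Arguments TNm {S} x.
Arguments TApp {S s t} _ _.
Arguments TLam {S} x {t} _.

Definition tneq {S : countType} (s : ty S) (a b : tm s) : tm To :=
  TApp (TNm NNeg) (TApp (TApp (TNm (NEq s)) a) b).

Definition efo_name {S : countType} (x : name S) : bool :=
  match x with
  | NVar _ _ => true
  | NNeg => true
  | NImp => true
  | NEq s => is_sort s
  | NAll _ => true
  end.

Fixpoint efo {S : countType} (s : ty S) (t : tm s) : bool :=
  match t with
  | TNm x => efo_name x
  | TApp _ _ u v => efo u && efo v
  | TLam x _ u => efo_name x && efo u
  end.

Definition quasi_efo {S : countType} (f : tm (@To S)) : Prop :=
  efo f \/ exists (s : ty S) (a b : tm s), efo a /\ efo b /\ f = tneq a b.

(* A frame: nonempty carriers with D(st) a set of functions D s -> D t,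
   presented as an extensional applicative structure. *)
Record frame (S : countType) : Type := Frame {
  dom : ty S -> Type;
  app : forall s t, dom (Tarr s t) -> dom s -> dom t;
  app_ext : forall s t (f g : dom (Tarr s t)),
      (forall a, app f a = app g a) -> f = g;
  dom_ne : forall s, inhabited (dom s)
}.
Arguments app {S} _ {s t} _ _.

Definition standard {S : countType} (F : frame S) : Prop :=
  forall (s t : ty S) (h : dom F s -> dom F t),
    exists f : dom F (Tarr s t), forall a, app F f a = h a.

Definition assignment {S : countType} (F : frame S) : Type :=
  forall x : name S, dom F (ntype x).

Definition upd {S : countType} {F : frame S} (I : assignment F)
  (x : name S) (a : dom F (ntype x)) : assignment F :=
  fun y => match name_dec x y with
           | left e => eq_rect x (fun z => dom F (ntype z)) a y e
           | right _ => I y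
           end.
Arguments upd {S F} I x a _.

(* partial evaluation, as a relation *)
Inductive eval {S : countType} (F : frame S) :
  assignment F -> forall s : ty S, tm s -> dom F s -> Prop :=
| ev_nm (I : assignment F) (x : name S) : eval I (TNm x) (I x)
| ev_app (I : assignment F) (s t : ty S) (u : tm (Tarr s t)) (v : tm s)
    (f : dom F (Tarr s t)) (a : dom F s) :
    eval I u f -> eval I v a -> eval I (TApp u v) (app F f a)
| ev_lam (I : assignment F) (x : name S) (t : ty S) (u : tm t)
    (f : dom F (Tarr (ntype x) t)) :
    (forall a : dom F (ntype x), eval (upd I x a) u (app F f a)) ->
    eval I (TLam x u) f.

Definition interpretation {S : countType} {F : frame S} (I : assignment F) : Prop :=
  forall (s : ty S) (t : tm s), exists v, eval I t v.

Definition tv {S : countType} {F : frame S} (e : dom F To = bool) (v : dom F To) : bool :=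
  eq_rect _ (fun T : Type => T) v _ e.

Definition logical {S : countType} {F : frame S} (e : dom F To = bool)
  (I : assignment F) : Prop :=
    (forall p, tv e (app F (I NNeg) p) = ~~ tv e p) /\
    (forall p q, tv e (app F (app F (I NImp) p) q) = (tv e p ==> tv e q)) /\
    (forall (s : ty S) (a b : dom F s),
        tv e (app F (app F (I (NEq s)) a) b) = true <-> a = b) /\
    (forall (al : S) (f : dom F (Tarr (Tsort al) To)),
        tv e (app F (I (NAll al)) f) = true <-> forall a, tv e (app F f a) = true).

Definition holds {S : countType} {F : frame S} (e : dom F To = bool)
  (I : assignment F) (f : tm (@To S)) : Prop :=
  exists v, eval I f v /\ tv e v = true.

Definition satisfiable {S : countType} (A : tm (@To S) -> Prop) : Prop :=
  exists (F : frame S) (I : assignment F) (e : dom F To = bool),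
    interpretation I /\ logical e I /\ forall f, A f -> holds e I f.

Definition normop (S : countType) : Type := forall s : ty S, tm s -> tm s.

Fixpoint is_spine {S : countType} (s : ty S) (t : tm s) : bool :=
  match t with
  | TNm _ => true
  | TApp _ _ u _ => is_spine u
  | TLam _ _ _ => false
  end.

Fixpoint map_args {S : countType} (nf : normop S) (s : ty S) (t : tm s) : tm s :=
  match t in tm s return tm s with
  | TNm x => TNm x
  | TApp _ _ u v => TApp (map_args nf u) (nf _ v)
  | TLam x _ u => TLam x u
  end.

Definition norm_axioms {S : countType} (nf : normop S) : Prop :=
  (forall s (t : tm s), nf s (nf s t) = nf s t) /\
  (forall s t (u : tm (Tarr s t)) (v : tm s),
      nf t (TApp (nf _ u) v) = nf t (TApp u v)) /\
  (forall s (t : tm s), is_base s -> is_spine t ->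
      nf s t = map_args nf t) /\
  (forall (F : frame S) (I : assignment F), interpretation I ->
      forall s (t : tm s) (v : dom F s),
        eval I (nf s t) v <-> eval I t v).

Definition subst (S : countType) : Type := forall x : name S, option (tm (ntype x)).

Definition subst_empty (S : countType) : subst S := fun _ => None.

Definition supd {S : countType} (th : subst S) (x : name S) (t : tm (ntype x)) : subst S :=
  fun y => match name_dec x y with
           | left e => Some (eq_rect x (fun z => tm (ntype z)) t y e)
           | right _ => th y
           end.
Arguments supd {S} th x t _.

Definition subst_axioms {S : countType} (nf : normop S)
  (hat : subst S -> forall s : ty S, tm s -> tm s) : Prop :=
  (forall th (x : name S),
      hat th _ (TNm x) = match th x with Some t => t | None => TNm x end) /\
  (forall th s t (u : tm (Tarr s t)) (v : tm s),
      hat th t (TApp u v) = TApp (hat th _ u) (hat th s v)) /\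
  (forall th (x : name S) t (u : tm t) (v : tm (ntype x)),
      nf t (TApp (hat th _ (TLam x u)) v) = nf t (hat (supd th x v) t u)) /\
  (forall s (t : tm s), nf s (hat (@subst_empty S) s t) = nf s t).

Definition efo_branch {S : countType} (nf : normop S) (A : tm (@To S) -> Prop) : Prop :=
  forall f, A f -> nf To f = f /\ quasi_efo f.

Definition countable_type (T : Type) : Prop :=
  exists g : T -> nat, injective g.

(* The Henkin model F, I is collapsed onto a standard model in two steps.  First, the
   denotations of all terms and both truth values are closed under application, under
   counterexamples to universal statements over sorts, and under arguments separating
   distinct functions; this closure M is countable, as its elements have codes in a
   countable type.  Second, a logical relation connects the elements of M with the full
   function hierarchy over the sorts of M; it is functional and injective on M, so every
   EFO term, whose equalities and quantifiers live at sorts, takes related values in both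
   models, and a disequation at any type survives by injectivity. *)

From HB Require Import structures.
From mathcomp Require Import all_boot.
From Stdlib Require Import ClassicalEpsilon ProofIrrelevance FunctionalExtensionality Eqdep_dec.

Section Countability.
Variable S : countType.

Fixpoint tree_of_ty (s : ty S) : GenTree.tree S :=
  match s with
  | To => GenTree.Node 0 [::]
  | Tsort a => GenTree.Leaf a
  | Tarr s t => GenTree.Node 1 [:: tree_of_ty s; tree_of_ty t]
  end.

Fixpoint ty_of_tree (c : GenTree.tree S) : option (ty S) :=
  match c with
  | GenTree.Leaf a => Some (Tsort a)
  | GenTree.Node 0 [::] => Some To
  | GenTree.Node 1 [:: c1; c2] =>
      if (ty_of_tree c1, ty_of_tree c2) is (Some s, Some t) then Some (Tarr s t)
      else None
  | _ => None
  end.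

Lemma tree_of_tyK : pcancel tree_of_ty ty_of_tree.
Proof. by elim=> //= s -> t ->. Qed.

HB.instance Definition _ := Countable.copy (ty S) (pcan_type tree_of_tyK).

Definition code_of_name (x : name S) : (ty S * nat) + (bool + (ty S + S)) :=
  match x with
  | NVar s n => inl (s, n)
  | NNeg => inr (inl true)
  | NImp => inr (inl false)
  | NEq s => inr (inr (inl s))
  | NAll a => inr (inr (inr a))
  end.

Definition name_of_code (c : (ty S * nat) + (bool + (ty S + S))) : name S :=
  match c with
  | inl (s, n) => NVar s n
  | inr (inl b) => if b then NNeg else NImp
  | inr (inr (inl s)) => NEq s
  | inr (inr (inr a)) => NAll a
  end.

Lemma code_of_nameK : cancel code_of_name name_of_code.
Proof. by case. Qed.

HB.instance Definition _ := Countable.copy (name S) (can_type code_of_nameK).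

Definition typed_tm : Type := {s : ty S & tm s}.

Fixpoint tree_of_tm (s : ty S) (t : tm s) : GenTree.tree (name S) :=
  match t with
  | TNm x => GenTree.Leaf x
  | TApp _ _ u v => GenTree.Node 0 [:: tree_of_tm _ u; tree_of_tm _ v]
  | TLam x _ u => GenTree.Node 1 [:: GenTree.Leaf x; tree_of_tm _ u]
  end.

Definition typed_app (p q : typed_tm) : option typed_tm :=
  let: existT s u := p in let: existT s' v := q in
  match s as s return tm s -> option typed_tm with
  | Tarr a b => fun u =>
      if ty_dec s' a is left e then Some (existT _ b (TApp u (eq_rect s' (@tm S) v a e)))
      else None
  | _ => fun _ => None
  end u.

Fixpoint tm_of_tree (c : GenTree.tree (name S)) : option typed_tm :=
  match c with
  | GenTree.Leaf x => Some (existT _ _ (TNm x))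
  | GenTree.Node 0 [:: c1; c2] =>
      if (tm_of_tree c1, tm_of_tree c2) is (Some p, Some q) then typed_app p q else None
  | GenTree.Node 1 [:: GenTree.Leaf x; c] =>
      if tm_of_tree c is Some (existT _ u) then Some (existT _ _ (TLam x u)) else None
  | _ => None
  end.

Lemma tree_of_tmK : pcancel (fun p : typed_tm => tree_of_tm _ (projT2 p)) tm_of_tree.
Proof.
case=> s t; elim: t => //= [s' t' u -> v ->|x t' u -> //].
by rewrite /=; case: ty_dec => // E; rewrite [E]eq_axiomK.
Qed.

HB.instance Definition _ := Countable.copy typed_tm (pcan_type tree_of_tmK).

End Countability.

Section Evaluation.
Context {S : countType} {F : frame S}.
Implicit Types J : assignment F.

Definition eval_inv J {s} (t : tm s) : dom F s -> Prop :=
  match t in tm s return dom F s -> Prop with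
  | TNm x => fun v => v = J x
  | TApp _ _ u w => fun v => exists f a, eval J u f /\ eval J w a /\ v = app F f a
  | TLam x _ u => fun f => forall a, eval (upd J x a) u (app F f a)
  end.

Lemma evalE {J s} {t : tm s} {v} : eval J t v -> eval_inv J t v.
Proof. by case=> //=; eauto 6. Qed.

Lemma eval_det {J s} {t : tm s} {v v'} : eval J t v -> eval J t v' -> v = v'.
Proof.
move=> Hv; elim: Hv v' => {J s t v} [J x|J s t u w f a _ IHu _ IHw|J x t u f _ IH] v'.
- by move/evalE.
- by case/evalE=> f' [a' [/IHu <- [/IHw <- ->]]].
- by move/evalE=> Hf'; apply: app_ext => a; apply: IH.
Qed.

Lemma upd_eq J x a : upd J x a x = a.
Proof. by rewrite /upd; case: name_dec => // E; rewrite [E]eq_axiomK. Qed.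

Lemma upd_neq J x a z : x <> z -> upd J x a z = J z.
Proof. by rewrite /upd; case: name_dec. Qed.

Fixpoint fv {s} (t : tm s) : seq (name S) :=
  match t with
  | TNm x => [:: x]
  | TApp _ _ u w => fv u ++ fv w
  | TLam x _ u => filter (predC1 x) (fv u)
  end.

Lemma eval_agree {J J' s} {t : tm s} {v} :
  eval J t v -> {in fv t, forall z, J' z = J z} -> eval J' t v.
Proof.
move=> Hv; elim: Hv J' => {J s t v} [J x|J s t u w f a _ IHu _ IHw|J x t u f _ IH] J' /= ag.
- by rewrite -ag ?mem_head //; constructor.
- by constructor; [apply: IHu | apply: IHw] => z Hz; apply: ag; rewrite mem_cat Hz ?orbT.
- constructor=> a; apply: IH => z Hz; rewrite /upd; case: name_dec => // /eqP xz.
  by apply: ag; rewrite mem_filter /= eq_sym xz.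
Qed.

Lemma efo_fv {s} {t : tm s} : efo t -> all efo_name (fv t).
Proof.
elim: t => [x|s1 t1 u IHu w IHw|x t1 u IH] /=; first by rewrite andbT.
- by case/andP=> /IHu Hu /IHw Hw; rewrite all_cat Hu.
- by case/andP=> _ /IH Hu; rewrite all_filter; apply/allP=> z /(allP Hu) Hz; exact/implyP.
Qed.

Lemma eval_tneq {J s} {a b : tm s} {v} : eval J (tneq a b) v ->
  exists va vb, [/\ eval J a va, eval J b vb &
                    v = app F (J NNeg) (app F (app F (J (NEq s)) va) vb)].
Proof.
case/evalE=> _ [p [/evalE -> [/evalE [q [vb [/evalE [_ [va [/evalE -> [Ha ->]]]] [Hb ->]]]] ->]]].
by exists va, vb.
Qed.

Lemma standard_interpretation : standard F -> forall J, interpretation J.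
Proof.
move=> stdF J s t; elim: t J => [x|s' t' u IHu w IHw|x t' u IH] J.
- by exists (J x); constructor.
- by have [[f Hf] [a Ha]] := (IHu J, IHw J); exists (app F f a); constructor.
- have [h Hh] := choice _ (fun a => IH (upd J x a)).
  have [f Hf] := stdF _ _ h.
  by exists f; constructor=> a; rewrite Hf.
Qed.

Fixpoint lams_ty (ys : seq (name S)) (s : ty S) : ty S :=
  if ys is y :: ys then Tarr (ntype y) (lams_ty ys s) else s.

Fixpoint lams (ys : seq (name S)) {s} (t : tm s) : tm (lams_ty ys s) :=
  if ys is y :: ys then TLam y (lams ys t) else t.

Fixpoint app_vals (ys : seq (name S)) {s} J : dom F (lams_ty ys s) -> dom F s :=
  if ys is y :: ys then fun f => app_vals ys J (app F f (J y)) else id.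

Lemma eval_lams {ys J J' s} {t : tm s} {f} :
  eval J (lams ys t) f -> (forall z, z \notin ys -> J' z = J z) ->
  eval J' t (app_vals ys J' f).
Proof.
elim: ys J f => [|y ys IH] J f /= Hf agree.
- by apply: eval_agree Hf _ => z _; apply: agree.
- move/evalE: Hf => /(_ (J' y)) Hf; apply: IH Hf _ => z zNys.
  have [<-|yz] := name_dec y z; first by rewrite upd_eq.
  by rewrite upd_neq // agree // inE negb_or zNys andbT eq_sym; apply/eqP.
Qed.

End Evaluation.

Section Transport.
Context {S : countType} {F : frame S} (e : dom F To = bool).

Definition of_bool (b : bool) : dom F To := eq_rect _ (fun T : Type => T) b _ (esym e).

Lemma of_bool_tv v : of_bool (tv e v) = v.
Proof. by rewrite /tv /of_bool; move: (dom F To) e v => T E v; subst. Qed.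

Lemma tv_inj : injective (tv e).
Proof. by move=> v v' E; rewrite -[v]of_bool_tv E of_bool_tv. Qed.

End Transport.

Lemma sval_inj {A : Type} {P : A -> Prop} : injective (@proj1_sig A P).
Proof. exact: eq_sig_hprop (fun x => proof_irrelevance (P x)). Qed.

Section StandardModel.
Context {S : countType} {F : frame S} (I : assignment F) (e : dom F To = bool).
Hypothesis I_total : interpretation I.

Local Notation X := {s : ty S & dom F s}.

Lemma existT_inj {s} {a b : dom F s} : existT _ s a = existT _ s b -> a = b.
Proof. exact: (inj_pair2_eq_dec _ (@ty_dec S)). Qed.

Definition value {s} (t : tm s) : dom F s := epsilon (dom_ne F s) (eval I t).

Lemma eval_value {s} (t : tm s) : eval I t (value t).
Proof. exact: epsilon_spec (I_total _ t). Qed.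

Definition app_rel (x y z : X) : Prop := exists s t (f : dom F (Tarr s t)) a,
  [/\ x = existT _ _ f, y = existT _ _ a & z = existT _ _ (app F f a)].

Definition counterexample_rel (x z : X) : Prop :=
  exists al (f : dom F (Tarr (Tsort al) To)) a,
  [/\ x = existT _ _ f, z = existT _ _ a & tv e (app F f a) = false].

Definition separation_rel (x y z : X) : Prop := exists s t (f g : dom F (Tarr s t)) a,
  [/\ x = existT _ _ f, y = existT _ _ g, z = existT _ _ a & app F f a <> app F g a].

Definition closure_rel (k : nat) : X -> X -> X -> Prop :=
  match k with
  | 0 => app_rel
  | 1 => fun x _ => counterexample_rel x
  | _ => separation_rel
  end.

Definition seed (l : typed_tm S + bool) : X :=
  match l with
  | inl (existT s t) => existT _ s (value t)
  | inr b => existT _ To (of_bool e b)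
  end.

(* A code [Node k [:: c1; c2]] names a [closure_rel k]-successor of the elements named by
   [c1] and [c2], whenever one exists; the closure is countable because its codes are. *)
Fixpoint decode (c : GenTree.tree (typed_tm S + bool)) : X :=
  match c with
  | GenTree.Leaf l => seed l
  | GenTree.Node k [:: c1; c2] =>
      let x := decode c1 in epsilon (inhabits x) (closure_rel k x (decode c2))
  | GenTree.Node _ _ => seed (inr true)
  end.

Definition in_closure (x : X) : Prop := exists c, decode c = x.

Local Notation inM v := (in_closure (existT _ _ v)).

Lemma in_closure_rel k {x y z} : in_closure x -> in_closure y -> closure_rel k x y z ->
  exists2 z', closure_rel k x y z' & in_closure z'.
Proof.
move=> [c1 <-] [c2 <-] Hz; set c := GenTree.Node k [:: c1; c2].
exists (decode c); last by exists c.
exact: (epsilon_spec (inhabits (decode c1)) _ (ex_intro _ z Hz)).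
Qed.

Lemma closure_eval {s} {t : tm s} {v} : eval I t v -> inM v.
Proof.
by move=> Hv; exists (GenTree.Leaf (inl (existT _ s t))); rewrite /= (eval_det (eval_value t) Hv).
Qed.

Lemma closure_I x : inM (I x).
Proof. exact: closure_eval (ev_nm I x). Qed.

Lemma closure_bool (v : dom F To) : inM v.
Proof. by exists (GenTree.Leaf (inr (tv e v))); rewrite /= of_bool_tv. Qed.

Lemma closure_app {s t} {f : dom F (Tarr s t)} {a} : inM f -> inM a -> inM (app F f a).
Proof.
move=> Hf Ha.
have [|z [s' [t' [f' [a' [Ef Ea ->]]]]]] := in_closure_rel 0 (z := existT _ _ (app F f a)) Hf Ha.
  by exists s, t, f, a.
case: (congr1 (@projT1 _ _) Ef) => ? ?; subst s' t'.
by rewrite -(existT_inj Ef) -(existT_inj Ea).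
Qed.

Lemma closure_counterexample {al} {f : dom F (Tarr (Tsort al) To)} {a} :
  inM f -> tv e (app F f a) = false -> exists2 a', inM a' & tv e (app F f a') = false.
Proof.
move=> Hf Hfa.
have [|z [al' [f' [a' [Ef -> Hfa']]]]] := in_closure_rel 1 (z := existT _ _ a) Hf Hf.
  by exists al, f, a.
case: (congr1 (@projT1 _ _) Ef) => ?; subst al'.
by rewrite -(existT_inj Ef) in Hfa'; exists a'.
Qed.

Lemma closure_ext {s t} {f g : dom F (Tarr s t)} :
  inM f -> inM g -> (forall a, inM a -> app F f a = app F g a) -> f = g.
Proof.
move=> Hf Hg Hfg; apply: app_ext => a; apply: NNPP => Hfga.
have [|z [s' [t' [f' [g' [a' [Ef Eg -> Hfga']]]]]]] := in_closure_rel 2 (z := existT _ _ a) Hf Hg.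
  by exists s, t, f, g, a.
case: (congr1 (@projT1 _ _) Ef) => ? ?; subst s' t'.
by rewrite -(existT_inj Ef) -(existT_inj Eg) in Hfga'; move/Hfg.
Qed.

Lemma closure_app_vals {ys s} {J : assignment F} {f : dom F (lams_ty ys s)} :
  inM f -> (forall y, y \in ys -> inM (J y)) -> inM (app_vals ys J f).
Proof.
elim: ys f => [|y ys IH] f //= Hf HJ.
apply: IH => [|z Hz]; first exact: closure_app Hf (HJ _ (mem_head _ _)).
by apply: HJ; rewrite inE Hz orbT.
Qed.

(* A value of [t] under [J] is the value of the closed-up abstraction [lams (fv t) t] under
   [I], applied to the values of the free variables. *)
Lemma closure_eval_asg {J : assignment F} {s} {t : tm s} {v} :
  eval J t v -> (forall z, z \in fv t -> inM (J z)) -> inM v.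
Proof.
move=> Hv HJ; pose J' : assignment F := fun z => if z \in fv t then J z else I z.
have Hlam := eval_value (lams (fv t) t).
have Hv' : eval J' t (app_vals (fv t) J' (value (lams (fv t) t))).
  by apply: eval_lams Hlam _ => z /negbTE zNt; rewrite /J' zNt.
rewrite (eval_det (eval_agree Hv (J' := J') _) Hv') => [|z zt]; last by rewrite /J' zt.
by apply: closure_app_vals (closure_eval Hlam) _ => y yt; rewrite /J' yt; apply: HJ.
Qed.

Lemma countable_closure s : countable_type {v : dom F s | inM v}.
Proof.
pose code (v : {v : dom F s | inM v}) :=
  epsilon (inhabits (GenTree.Leaf (inr true))) (fun c => decode c = existT _ s (sval v)).
have codeK v : decode (code v) = existT _ s (sval v).
  by case: v => v [c Hc]; apply: (epsilon_spec _ (fun c => decode c = _)); exists c.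
exists (fun v => pickle (code v)) => v w /(pcan_inj pickleK) Ecode.
by apply/sval_inj/existT_inj; rewrite -codeK Ecode codeK.
Qed.

Fixpoint carrier (s : ty S) : Type :=
  match s with
  | To => bool
  | Tsort al => {v : dom F (Tsort al) | inM v}
  | Tarr s t => carrier s -> carrier t
  end.

Fixpoint default (s : ty S) : carrier s :=
  match s return carrier s with
  | To => true
  | Tsort al => exist _ (I (NVar (Tsort al) 0)) (closure_I (NVar (Tsort al) 0))
  | Tarr _ t => fun _ => default t
  end.

Definition std_frame : frame S := {|
  dom := carrier;
  app := fun s t (f : carrier (Tarr s t)) a => f a;
  app_ext := fun s t f g => functional_extensionality f g;
  dom_ne := fun s => inhabits (default s) |}.

Lemma standard_std_frame : standard std_frame.
Proof. by move=> s t h; exists h. Qed.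

Fixpoint rel_val (s : ty S) : dom F s -> carrier s -> Prop :=
  match s return dom F s -> carrier s -> Prop with
  | To => fun v b => tv e v = b
  | Tsort _ => fun v b => v = sval b
  | Tarr s t => fun f g => inM f /\ forall a b, rel_val s a b -> rel_val t (app F f a) (g b)
  end.

Arguments rel_val {s}.

Lemma rel_val_closure {s : ty S} {v : dom F s} {b} : rel_val v b -> inM v.
Proof.
case: s v b => [|al|s t] v b /=; first by move=> _; apply: closure_bool.
  by move=> ->; case: b.
by case.
Qed.

(* Totality at [s] gives injectivity at [Tarr s t] (by extensionality on the closure), and
   injectivity at [s] makes the choice of an image at [Tarr s t] well defined. *)
Lemma rel_val_inj_total s :
  (forall (v v' : dom F s) b, rel_val v b -> rel_val v' b -> v = v') /\
  (forall v : dom F s, inM v -> exists b, rel_val v b).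
Proof.
elim: s => [|al|s [injs tots] t [injt tott]].
- by split=> [v v' b /= <- /tv_inj|v _]; last exists (tv e v).
- by split=> [v v' b /= -> ->|v Mv]; last exists (exist _ v Mv).
- split=> [f f' g [Mf Rf] [Mf' Rf']|f Mf].
    apply: closure_ext Mf Mf' _ => a /tots [b Rab].
    exact: injt (Rf _ _ Rab) (Rf' _ _ Rab).
  have Hg b : exists w, forall a, rel_val a b -> rel_val (app F f a) w.
    have [[a Rab]|noa] := classic (exists a, rel_val a b); last first.
      by exists (default t) => a Rab; case: noa; exists a.
    have [w Rw] := tott _ (closure_app Mf (rel_val_closure Rab)).
    by exists w => a' /(injs _ _ _ Rab) <-.
  by have [g Rg] := choice _ Hg; exists g; split=> // a b /Rg.
Qed.

Lemma rel_val_inj {s : ty S} {v v' : dom F s} {b} : rel_val v b -> rel_val v' b -> v = v'.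
Proof. exact: (rel_val_inj_total s).1. Qed.

Lemma rel_val_total {s : ty S} {v : dom F s} : inM v -> exists b, rel_val v b.
Proof. exact: (rel_val_inj_total s).2. Qed.

Definition rel_asg (I0 : assignment F) (J0 : assignment std_frame) : Prop :=
  forall y, efo_name y -> rel_val (I0 y) (J0 y).

Lemma rel_asg_upd {I0 J0} x {a b} :
  rel_asg I0 J0 -> rel_val a b -> rel_asg (upd I0 x a) (upd J0 x b).
Proof.
move=> HR Rab y Hy; rewrite /upd; case: name_dec => [E|_]; last exact: HR.
by case: y / E Hy.
Qed.

Lemma eval_rel {s} {t : tm s} : efo t -> forall {I0 J0 v},
  rel_asg I0 J0 -> eval I0 t v -> exists2 w, eval J0 t w & rel_val v w.
Proof.
elim: t => [x|s1 t1 u IHu w IHw|x t1 u IH] efo_t I0 J0 v HR Hv.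
- by move/evalE: Hv => ->; exists (J0 x); [constructor | apply: HR].
- case/andP: efo_t => efo_u efo_w; case/evalE: Hv => f [a [Hf [Ha ->]]].
  have [g Hg Rfg] := IHu efo_u _ _ _ HR Hf; have [b Hb Rab] := IHw efo_w _ _ _ HR Ha.
  by exists (g b); [exact: ev_app Hg Hb | exact: Rfg.2].
- have Mv : inM v.
    by apply: closure_eval_asg Hv _ => z /(allP (efo_fv efo_t)) /HR /rel_val_closure.
  case/andP: efo_t => _ efo_u; move/evalE: Hv => Hv.
  have Hh b : exists w, eval (upd J0 x b) u w /\ forall a, rel_val a b -> rel_val (app F v a) w.
    have [[a Rab]|noa] := classic (exists a, rel_val a b); last first.
      have [w Hw] := standard_interpretation standard_std_frame (upd J0 x b) _ u.
      by exists w; split=> // a Rab; case: noa; exists a.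
    have [w Hw Rw] := IH efo_u _ _ _ (rel_asg_upd x HR Rab) (Hv a).
    by exists w; split=> // a' /(rel_val_inj Rab) <-.
  have [h Rh] := choice _ Hh.
  by exists h; [constructor=> b; exact: (Rh b).1 | split=> // a b /(Rh b).2].
Qed.

Definition decide (P : Prop) : bool := if excluded_middle_informative P then true else false.

Lemma decideP P : reflect P (decide P).
Proof. by rewrite /decide; case: excluded_middle_informative => H; constructor. Qed.

Definition std_asg : assignment std_frame := fun x =>
  match x return carrier (ntype x) with
  | NVar s n => epsilon (inhabits (default s)) (rel_val (I (NVar s n)))
  | NNeg => negb
  | NImp => implb
  | NEq s => fun a b => decide (a = b)
  | NAll al => fun g => decide (forall b, g b)
  end.

Lemma logical_std_asg : logical (erefl : dom std_frame To = bool) std_asg.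
Proof.
by do 3!split=> //; [move=> s a b | move=> al f]; split=> /decideP.
Qed.

Hypothesis I_logical : logical e I.

Lemma rel_eq_sort al : rel_val (I (NEq (Tsort al))) (std_asg (NEq (Tsort al))).
Proof.
have [_ [_ [eqI _]]] := I_logical.
split=> [|_ b ->]; first exact: (closure_I (NEq (Tsort al))).
split=> [|_ d ->]; first exact: closure_app (closure_I (NEq (Tsort al))) (proj2_sig b).
rewrite /=; case: decideP => [<-|bd]; first exact/eqI.
by apply/negbTE/negP => /eqI Ebd; apply: bd; apply: sval_inj.
Qed.

Lemma rel_all al : rel_val (I (NAll al)) (std_asg (NAll al)).
Proof.
have [_ [_ [_ allI]]] := I_logical.
split=> [|f g [Mf Rfg]]; first exact: (closure_I (NAll al)).
rewrite /=; case: decideP => [allg|notall].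
- apply/allI => a; apply: NNPP => /negP /negbTE fa.
  have [a' Ma' fa'] := closure_counterexample Mf fa.
  by move: (allg (exist _ a' Ma')); rewrite -(Rfg a' (exist _ a' Ma') erefl) fa'.
- by apply/negbTE/negP => /allI fI; apply: notall => b; rewrite -(Rfg _ b erefl).
Qed.

Lemma rel_asg_std : rel_asg I std_asg.
Proof.
have [negI [impI _]] := I_logical.
case=> [s n| | |[|al|s t]|al] //= _.
- by apply: epsilon_spec; apply: rel_val_total; apply: (closure_I (NVar s n)).
- by split=> [|p b <-]; [apply: (closure_I NNeg) | apply: negI].
- split=> [|p b Rpb]; first exact: (closure_I NImp).
  split=> [|q c <-]; first exact: closure_app (closure_I NImp) (closure_bool p).
  by rewrite impI Rpb.
- exact: rel_eq_sort.
- exact: rel_all.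
Qed.

Lemma holds_std_asg f :
  quasi_efo f -> holds e I f -> holds (erefl : dom std_frame To = bool) std_asg f.
Proof.
have [negI [_ [eqI _]]] := I_logical.
case=> [efo_f|[s [a [b [efo_a [efo_b ->]]]]]] [v [Hv Tv]].
  by have [w Hw Rvw] := eval_rel efo_f rel_asg_std Hv; exists w; split; last rewrite -Rvw.
have [va [vb [Ha Hb Ev]]] := eval_tneq Hv.
have [wa Hwa Ra] := eval_rel efo_a rel_asg_std Ha.
have [wb Hwb Rb] := eval_rel efo_b rel_asg_std Hb.
exists (~~ decide (wa = wb)); split.
  exact: ev_app (ev_nm _ NNeg) (ev_app (ev_app (ev_nm _ (NEq s)) Hwa) Hwb).
case: decideP => // Ewab; move: Tv; rewrite Ev negI.
by rewrite (proj2 (eqI _ va vb)) //; apply: rel_val_inj Ra _; rewrite Ewab.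
Qed.

End StandardModel.

Theorem corollary14p7 (S : countType) (nf : normop S)
    (hat : subst S -> forall s : ty S, tm s -> tm s) :
  norm_axioms nf -> subst_axioms nf hat ->
  forall A : tm (@To S) -> Prop,
    efo_branch nf A -> satisfiable A ->
    exists (F : frame S) (I : assignment F) (e : dom F To = bool),
      standard F /\ logical e I /\ (forall f, A f -> holds e I f) /\
      (forall al : S, countable_type (dom F (Tsort al))).
Proof.
move=> _ _ A A_branch [F [I [e [I_total [I_logical A_holds]]]]].
exists (std_frame I e I_total), (std_asg I e I_total), erefl.
split; first exact: standard_std_frame.
split; first exact: logical_std_asg.
split=> [f Af|al]; last exact: countable_closure.
by apply: holds_std_asg I_logical _ (A_branch f Af).2 (A_holds f Af).
Qed.
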